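(* Let $\lambda$ be a nonzero real number and $n\ge2$ an integer. Then $$\sum_{k=2}^{n}(1)_{k-1,\frac{1}{\lambda}}\,\lambda^{k-2}\,S_{2,\lambda}(n,k)=(n-1)(1)_{n-1,\lambda}.$$
   Context: For real $y$, $\mu\neq 0$ and integer $k\ge0$: $(y)_{0,\mu}=1$, $(y)_{k,\mu}=y(y-\mu)\cdots(y-(k-1)\mu)$ (used with $\mu=\lambda$ and $\mu=1/\lambda$); $(y)_0=1$, $(y)_k=y(y-1)\cdots(y-k+1)$. The degenerate Stirling numbers of the second kind are defined by $(x)_{n,\lambda}=\sum_{k=0}^{n}S_{2,\lambda}(n,k)(x)_{k}$ ($n\ge0$); equivalently $\frac{1}{k!}(e_\lambda(t)-1)^k=\sum_{n\ge k}S_{2,\lambda}(n,k)\frac{t^n}{n!}$ with $e_\lambda(t)=(1+\lambda t)^{1/\lambda}$. *)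

From mathcomp Require Import all_boot all_order all_algebra.
Set Implicit Arguments. Unset Strict Implicit. Unset Printing Implicit Defensive.
Import Order.TTheory GRing.Theory Num.Theory.
Local Open Scope ring_scope.

(* generalized falling factorial (y)_{k,mu} = y (y - mu) ... (y - (k-1) mu);
   (y)_{0,mu} = 1, and (y)_k = gfall y 1 k *)
Definition gfall {R : pzRingType} (y mu : R) (k : nat) : R :=
  \prod_(i < k) (y - i%:R * mu).

Definition is_deg_stirling2 {R : pzRingType} (lam : R) (S : nat -> nat -> R) :=
  forall (n : nat) (x : R), gfall x lam n = \sum_(k < n.+1) S n k * gfall x 1 k.

(* Since (x)_{n,lam} = x (x - lam)_{n-1,lam} and (x)_k = x (x - 1)_{k-1},
   dividing the defining identity of S_{2,lam}(n, .) by x gives the polynomial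
   identity (x - lam)_{n-1,lam} = sum_k S_{2,lam}(n,k) (x - 1)_{k-1}, first for
   x <> 0 and hence for all x.  At x = lam + 1 the right side becomes
   sum_k S_{2,lam}(n,k) (lam)_{k-1}, where (lam)_{k-1} = lam^{k-1} (1)_{k-1,1/lam};
   its k = 1 term is S_{2,lam}(n,1) = (1)_{n,lam} (take x = 1 in the
   definition), and (1)_{n-1,lam} - (1)_{n,lam} = (n-1) lam (1)_{n-1,lam}. *)
From mathcomp Require Import all_boot all_order all_algebra.
From mathcomp Require Import ring.
Set Implicit Arguments. Unset Strict Implicit. Unset Printing Implicit Defensive.
Import Order.TTheory GRing.Theory Num.Theory.
Local Open Scope ring_scope.

Section GeneralizedFalling.
Variable R : pzRingType.
Implicit Types (y mu : R) (k : nat).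

Lemma gfall0 y mu : gfall y mu 0 = 1.
Proof. by rewrite /gfall big_ord0. Qed.

Lemma gfallS y mu k : gfall y mu k.+1 = y * gfall (y - mu) mu k.
Proof.
rewrite /gfall big_ord_recl mul0r subr0; congr (_ * _).
apply: eq_bigr => i _.
by rewrite lift0 -addn1 natrD mulrDl mul1r opprD [_ - mu]addrC addrA.
Qed.

Lemma gfall1 y mu : gfall y mu 1 = y.
Proof. by rewrite gfallS gfall0 mulr1. Qed.

Lemma gfallSr y mu k : gfall y mu k.+1 = gfall y mu k * (y - k%:R * mu).
Proof. by rewrite /gfall big_ord_recr. Qed.

Lemma gfall0S mu k : gfall 0 mu k.+1 = 0.
Proof. by rewrite gfallS mul0r. Qed.

Lemma gfall11 k : gfall (1 : R) 1 k.+2 = 0.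
Proof. by rewrite gfallS subrr gfall0S mulr0. Qed.

End GeneralizedFalling.

Lemma gfall_scale (F : fieldType) k (lam : F) : lam != 0 ->
  lam ^+ k * gfall 1 lam^-1 k = gfall lam 1 k.
Proof.
move=> lam0; elim: k => [|k IHk]; first by rewrite !gfall0 mulr1.
by rewrite !gfallSr -IHk exprSr; field.
Qed.

Definition gfallp (R : comNzRingType) (c mu : R) k : {poly R} :=
  \prod_(i < k) ('X + (c - i%:R * mu)%:P).

Lemma horner_gfallp (R : comNzRingType) (c mu x : R) k :
  (gfallp c mu k).[x] = gfall (x + c) mu k.
Proof.
rewrite /gfallp horner_prod; apply: eq_bigr => i _.
by rewrite hornerD hornerX hornerC addrA.
Qed.

Lemma eq_poly_except (R : numDomainType) (a : R) (p q : {poly R}) :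
  (forall x, x != a -> p.[x] = q.[x]) -> p = q.
Proof.
move=> Epq; apply/eqP; rewrite -subr_eq0; apply/eqP.
pose rs := [seq a + i.+1%:R | i <- iota 0 (size (p - q))].
apply: (@roots_geq_poly_eq0 _ _ rs); last by rewrite size_map size_iota.
  apply/allP => _ /mapP [i _ ->]; apply/rootP.
  by rewrite hornerD hornerN Epq ?subrr // -subr_eq0 addrC addKr pnatr_eq0.
rewrite map_inj_uniq ?iota_uniq // => i j /addrI /eqP.
by rewrite eqr_nat => /eqP [].
Qed.

Section DegenerateStirling.
Variables (R : numFieldType) (lam : R) (S : nat -> nat -> R).
Hypothesis S_def : is_deg_stirling2 lam S.

Lemma deg_stirling2_S0 n : S n.+1 0 = 0.
Proof.
have := S_def n.+1 0; rewrite gfall0S big_ord_recl big1 => [|i _]; last first.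
  by rewrite gfall0S mulr0.
by rewrite gfall0 mulr1 addr0.
Qed.

Lemma deg_stirling2_S1 n : S n.+1 1 = gfall 1 lam n.+1.
Proof.
have := S_def n.+1 1; rewrite !big_ord_recl deg_stirling2_S0 mul0r add0r.
rewrite big1 => [|i _]; last by rewrite gfall11 mulr0.
by rewrite gfall1 mulr1 addr0.
Qed.

Lemma deg_stirling2_shift n x :
  gfall (x - lam) lam n = \sum_(k < n.+1) S n.+1 k.+1 * gfall (x - 1) 1 k.
Proof.
pose q := \sum_(k < n.+1) S n.+1 k.+1 *: gfallp (-1) 1 k.
suff /(congr1 (horner^~ x)) : gfallp (- lam) lam n = q.
  rewrite horner_gfallp horner_sum => ->; apply: eq_bigr => k _.
  by rewrite hornerZ horner_gfallp.
apply: (@eq_poly_except _ 0) => y y0; apply: (mulfI y0).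
rewrite horner_gfallp -gfallS S_def big_ord_recl deg_stirling2_S0 mul0r add0r.
rewrite horner_sum mulr_sumr; apply: eq_bigr => k _.
by rewrite hornerZ horner_gfallp gfallS mulrCA.
Qed.

Lemma deg_stirling2_sum_at_lam n :
  \sum_(k < n) S n.+1 k.+2 * gfall lam 1 k.+1 = n%:R * lam * gfall 1 lam n.
Proof.
have := deg_stirling2_shift n (lam + 1).
rewrite (addrK 1 lam) [lam + 1]addrC (addrK lam 1).
rewrite big_ord_recl gfall0 mulr1 deg_stirling2_S1 gfallSr.
by move/(canLR (addKr _)) <-; ring.
Qed.

End DegenerateStirling.

Theorem theorem15 (R : realFieldType) (lam : R) (S : nat -> nat -> R) (n : nat) :
  lam != 0 -> is_deg_stirling2 lam S -> (2 <= n)%N ->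
  \sum_(2 <= k < n.+1) gfall 1 lam^-1 k.-1 * lam ^+ (k - 2) * S n k
  = (n.-1)%:R * gfall 1 lam n.-1.
Proof.
move=> lam0 S_def; case: n => [|m] // _ /=; apply: (mulIf lam0).
rewrite -[RHS]mulrAC -(deg_stirling2_sum_at_lam S_def) mulr_suml.
rewrite (big_addn 0 m.+2 2) subn2 big_mkord; apply: eq_bigr => k _.
by rewrite addnK addn2 -(gfall_scale k.+1 lam0) exprS; ring.
Qed.
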